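(* Consider the generative logic with $\mu\to1$ in the setting below. Let $\Delta$ be a finite multiset of time-indexed formulas such that $E'(\Delta)=\emptyset$. Then for every $k\in\{1,\dots,K\}$, $p(D=d_k\mid\Delta)=p(D=d_k)=1/K$.
   Context: Let $\mathcal{L}$ be a propositional language and let $K,T\ge1$. There are data sequences $d_1,\dots,d_K$; repetitions are allowed, and data are identified by their index $k$. Each $d_k$ is associated with a sequence of models $m(d_k)=(m(d_k)^1,\dots,m(d_k)^T)$ of $\mathcal{L}$. The prior is $p(D=d_k)=1/K$. A time-indexed formula is written $\alpha^t$, with $\alpha\in\mathcal{L}$ and $1\le t\le T$. Write $[\![\alpha^t]\!]_k=1$ if $\alpha$ is true in $m(d_k)^t$, and $0$ otherwise. For $\mu\in(0,1)$ and a finite multiset $X$ of time-indexed formulas, define $$p(X\mid d_k,\mu)=\prod_{\alpha^t\in X}\mu^{[\![\alpha^t]\!]_k}(1-\mu)^{1-[\![\alpha^t]\!]_k}.$$ Then define $$p(D=d_k\mid\Delta)=\lim_{\mu\to1}\frac{p(\Delta\mid d_k,\mu)\,p(d_k)}{\sum_j p(\Delta\mid d_j,\mu)\,p(d_j)}.$$ An index $k$ is an evidence of $X$ if $[\![\alpha^t]\!]_k=1$ for all $\alpha^t\in X$. Let $E(X)$ be the set of such indices. $X$ is called founded if $E(X)\neq\emptyset$. Let $MFS(\Delta)$ be the set of nonempty founded sub-multisets $S\subseteq\Delta$ that have maximum cardinality among all nonempty founded sub-multisets of $\Delta$. Set $E'(\Delta)=\bigcup_{S\in MFS(\Delta)}E(S)$.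 This union is empty if $MFS(\Delta)=\emptyset$. Thus $E'(\Delta)=\emptyset$ iff no index is an evidence of any singleton of $\Delta$. *)

From HB Require Import structures.
From mathcomp Require Import all_boot all_order all_algebra.
From mathcomp Require Import all_classical all_reals all_analysis.
Set Implicit Arguments. Unset Strict Implicit. Unset Printing Implicit Defensive.
Import Order.TTheory GRing.Theory Num.Theory.
Local Open Scope ring_scope.

Inductive form (A : Type) : Type :=
  | FTop | FBot | FAtom of A | FNeg of form A
  | FAnd of form A & form A | FOr of form A & form A | FImp of form A & form A.
Arguments FTop {A}. Arguments FBot {A}.

Definition model (A : Type) := A -> bool.

Fixpoint eval (A : Type) (v : model A) (f : form A) : bool :=
  match f with
  | FTop => true | FBot => false | FAtom a => v a | FNeg g => ~~ eval v g
  | FAnd g h => eval v g && eval v h | FOr g h => eval v g || eval v h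
  | FImp g h => eval v g ==> eval v h
  end.

(* Time-indexed formula alpha^t, with t : 'I_T representing {1,..,T}. *)
Definition tform (A : Type) (T : nat) := (form A * 'I_T)%type.

Section Gen.
Variables (A : Type) (K T : nat) (m : 'I_K -> 'I_T -> model A).

Definition holds (k : 'I_K) (x : tform A T) : bool := eval (m k x.2) x.1.

(* A finite multiset Delta is given as a sequence; its sub-multisets are
   given by sets of positions in the sequence. *)
Variable Delta : seq (tform A T).

Definition at_pos (i : 'I_(size Delta)) : tform A T := tnth (in_tuple Delta) i.

Definition evidence (S : {set 'I_(size Delta)}) (k : 'I_K) : bool :=
  [forall i in S, holds k (at_pos i)].

Definition founded (S : {set 'I_(size Delta)}) : bool := [exists k, evidence S k].

Definition in_MFS (S : {set 'I_(size Delta)}) : bool :=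
  [&& S != finset.set0, founded S &
      [forall S' : {set 'I_(size Delta)}, (S' != finset.set0) && founded S' ==> (#|S'| <= #|S|)%N]].

Definition E' : {set 'I_K} := [set k | [exists S, in_MFS S && evidence S k]].

Variable R : realType.

Definition lik (k : 'I_K) (mu : R) : R :=
  \prod_(x <- Delta) (if holds k x then mu else 1 - mu).

Definition prior : R := (K%:R)^-1.

Definition post_mu (k : 'I_K) (mu : R) : R :=
  lik k mu * prior / \sum_(j < K) lik j mu * prior.

End Gen.

From HB Require Import structures.
From mathcomp Require Import all_boot all_order all_algebra.
From mathcomp Require Import all_classical all_reals all_analysis.
Import Order.TTheory GRing.Theory Num.Theory.
Import numFieldNormedType.Exports.
Local Open Scope classical_set_scope.
Local Open Scope ring_scope.

(* If E'(Delta) is empty then no formula of Delta holds in any model, since a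
   single true formula already gives a nonempty founded sub-multiset, hence a
   maximum one with an evidence.  All likelihoods are then (1 - mu)^|Delta|,
   which is nonzero for mu < 1, so the posterior is identically the prior on a
   left neighbourhood of 1. *)

Section Evidence.
Context {A : Type} {K T : nat} {m : 'I_K -> 'I_T -> model A}.
Context {Delta : seq (tform A T)}.

Lemma founded_E'_neq0 (S : {set 'I_(size Delta)}) :
  S != finset.set0 -> founded m S -> E' m Delta != finset.set0.
Proof.
move=> S_neq0 S_founded.
pose P (S' : {set 'I_(size Delta)}) := (S' != finset.set0) && founded m S'.
have PS : P S by apply/andP.
case: (arg_maxnP (fun S' : {set 'I_(size Delta)} => #|S'|) PS)
  => Smax /andP[Smax_neq0 Smax_founded] Smax_max.
case/existsP: (Smax_founded) => k k_ev.
apply/set0Pn; exists k; rewrite inE; apply/existsP; exists Smax.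
rewrite k_ev andbT /in_MFS Smax_neq0 Smax_founded; apply/forallP => S'.
by apply/implyP; exact: Smax_max.
Qed.

Lemma E'_eq0_holdsN : E' m Delta = finset.set0 ->
  forall k, all (fun x => ~~ holds m k x) Delta.
Proof.
move=> E'0 k; rewrite -[Delta]/(tval (in_tuple Delta)).
apply/all_tnthP => i; apply/negP => holds_i.
have : E' m Delta != finset.set0.
  apply: (founded_E'_neq0 [set i]%SET); first by apply/set0Pn; exists i; rewrite inE.
  by apply/existsP; exists k; apply/forallP => j; apply/implyP; rewrite inE => /eqP ->.
by rewrite E'0 eqxx.
Qed.

End Evidence.

Section Posterior.
Context {A : Type} {K T : nat} {m : 'I_K -> 'I_T -> model A}.
Context {Delta : seq (tform A T)} {R : realType}.

Lemma lik_holdsN (k : 'I_K) (mu : R) : all (fun x => ~~ holds m k x) Delta ->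
  lik m Delta k mu = (1 - mu) ^+ size Delta.
Proof.
rewrite /lik; elim: Delta => [|x s IH] /=; first by rewrite big_nil.
by case/andP => /negbTE x_false s_false; rewrite big_cons x_false IH // exprS.
Qed.

Lemma post_mu_uniform {mu c : R} : (0 < K)%N -> c != 0 ->
  (forall j, lik m Delta j mu = c) -> forall k, post_mu m Delta k mu = prior K R.
Proof.
move=> K_gt0 c_neq0 lik_c k; rewrite /post_mu.
under eq_bigr => j _ do rewrite lik_c.
rewrite lik_c sumr_const card_ord -mulr_natr invfM mulrA mulfV ?mul1r //.
by rewrite mulf_neq0 // invr_eq0 pnatr_eq0 -lt0n.
Qed.

End Posterior.

Theorem theorem4 (R : realType) (A : Type) (K T : nat) (hK : (1 <= K)%N) (hT : (1 <= T)%N)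
  (m : 'I_K -> 'I_T -> model A) (Delta : seq (tform A T)) :
  E' m Delta = finset.set0 ->
  forall k : 'I_K,
    (@post_mu A K T m Delta R k mu @[mu --> (1 : R)^'-] --> (prior K R : R)) /\ prior K R = (K%:R)^-1.
Proof.
move=> E'0 k; split; last by [].
have lik_const j mu : lik m Delta j mu = (1 - mu) ^+ size Delta :> R.
  by apply: lik_holdsN; exact: E'_eq0_holdsN.
apply: cvg_near_cst; near=> mu.
have mu_lt1 : mu < 1 by near: mu; exact: nbhs_left_lt.
have lik_neq0 : (1 - mu) ^+ size Delta != 0 by rewrite expf_neq0 // subr_eq0 gt_eqF.
exact: (post_mu_uniform hK lik_neq0 (lik_const ^~ mu)).
Unshelve. all: by end_near.
Qed.
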